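(* Let $S$ be an expanding automaton semigroup over an alphabet $\Sigma$ (i.e. $S=S(\mathcal{A})$ for an expanding automaton $\mathcal{A}$ over $\Sigma$), and let $P_\Sigma$ be the set of primes dividing $|\Sigma|!$. If $s\in S$ satisfies $s^m=s^n$ for some $m<n$ with $s,s^2,\dots,s^{n-1}$ pairwise distinct, then every prime divisor of $n-m$ lies in $P_\Sigma$.
   Context: An expanding automaton is a quadruple $\mathcal{A}=(Q,\Sigma,t,o)$ with $Q$ a finite set of states, $\Sigma$ a finite alphabet, $t:Q\times\Sigma\to Q$ and $o:Q\times\Sigma\to\Sigma^+$. Each state $q$ induces $q:\Sigma^*\to\Sigma^*$ by $q(\emptyset)=\emptyset$ and $q(\sigma w)=o(q,\sigma)\,q'(w)$ with $q'=t(q,\sigma)$. $S(\mathcal{A})$ is the semigroup of maps $\Sigma^*\to\Sigma^*$ generated under composition by the states. *)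

From mathcomp Require Import all_boot.
Set Implicit Arguments. Unset Strict Implicit. Unset Printing Implicit Defensive.

Record expanding_automaton (Q Sigma : finType) := ExpAut {
  ea_t : Q -> Sigma -> Q;
  ea_o : Q -> Sigma -> seq Sigma;
  ea_o_nonempty : forall q a, ea_o q a != [::]
}.

Fixpoint state_map (Q Sigma : finType) (A : expanding_automaton Q Sigma)
    (q : Q) (w : seq Sigma) : seq Sigma :=
  match w with
  | [::] => [::]
  | a :: w' => ea_o A q a ++ state_map A (ea_t A q a) w'
  end.

Definition word_map (Q Sigma : finType) (A : expanding_automaton Q Sigma)
    (qs : seq Q) : seq Sigma -> seq Sigma :=
  foldr (fun q f => state_map A q \o f) id qs.

Definition in_S (Q Sigma : finType) (A : expanding_automaton Q Sigma)
    (f : seq Sigma -> seq Sigma) : Prop :=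
  exists qs : seq Q, qs != [::] /\ f =1 word_map A qs.

(* Write F for the composite of the states of s and N = |Sigma|!.  Since the
   automaton is expanding, F never shortens a word, so on a periodic word it
   preserves length.  The first letter of F(a w) depends only on a, through a
   map Sigma -> Sigma whose periodic points have period dividing N; hence F^N
   fixes the first letter a of a periodic word, and a length count shows that
   F^N (a w) = a G(w) for the section G of F^N at a.  Inducting on the length,
   every periodic word of length l is fixed by F^(N^l).  So the period n - m
   of s^m w divides a power of N, and a prime p not dividing N could be
   cancelled from n - m, giving s^(m + (n-m)/p) = s^m and contradicting the
   distinctness of s, ..., s^(n-1). *)
From mathcomp Require Import all_boot.

Set Implicit Arguments.
Unset Strict Implicit.
Unset Printing Implicit Defensive.

Section IterFix.
Variables (T : Type) (f : T -> T) (x : T).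

Lemma iter_fix_dvdn d e : iter d f x = x -> d %| e -> iter e f x = x.
Proof. by move=> fix_d /dvdnP[k ->]; rewrite iterM iter_fix. Qed.

Lemma iter_fix_gcdn d e :
  0 < d -> iter d f x = x -> iter e f x = x -> iter (gcdn d e) f x = x.
Proof.
move=> d_gt0 fix_d fix_e; have [a _ /dvdnP[c def_c]] := Bezoutl e d_gt0.
have fix_ae : iter (a * e) f x = x by apply: iter_fix_dvdn fix_e (dvdn_mull _ _).
by rewrite -[in LHS]fix_ae -iterD def_c (iter_fix_dvdn fix_d) ?dvdn_mull.
Qed.

End IterFix.

Lemma iter_fact_card (T : finType) (f : T -> T) (x : T) d :
  0 < d -> iter d f x = x -> iter #|T|`! f x = x.
Proof.
move=> d_gt0 fix_d; apply: (@iter_fix_dvdn _ _ _ (order f x)).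
  by apply/(orbitPcycle 3 4); exists d.-1; rewrite prednK.
by rewrite dvdn_fact // order_gt0 max_card.
Qed.

Section ExpandingAutomaton.
Variables (Q Sigma : finType) (A : expanding_automaton Q Sigma).
Implicit Types (q : Q) (qs : seq Q) (a b : Sigma) (w x y : seq Sigma).

Local Notation F qs := (word_map A qs).

Lemma leq_size_state_map q w : size w <= size (state_map A q w).
Proof.
elim: w q => [|a w IHw] q //=; rewrite size_cat.
have := ea_o_nonempty A q a; case: (ea_o A q a) => // b o _ /=.
by rewrite addSn ltnS (leq_trans (IHw (ea_t A q a))) ?leq_addl.
Qed.

Lemma leq_size_word_map qs w : size w <= size (F qs w).
Proof.
by elim: qs => //= q qs IHqs; apply: leq_trans IHqs (leq_size_state_map _ _).
Qed.

Lemma leq_size_iter_word_map qs k w : size w <= size (iter k (F qs) w).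
Proof. by elim: k => //= k IHk; apply: leq_trans IHk (leq_size_word_map _ _). Qed.

Lemma word_map_nil qs : F qs [::] = [::].
Proof. by elim: qs => //= q qs ->. Qed.

Lemma word_map_cat qs1 qs2 w : F (qs1 ++ qs2) w = F qs1 (F qs2 w).
Proof. by rewrite /word_map foldr_cat; elim: qs1 => //= q qs <-. Qed.

Lemma iter_word_map k qs : iter k (F qs) =1 F (flatten (nseq k qs)).
Proof. by move=> w; elim: k => //= k ->; rewrite word_map_cat. Qed.

Definition run q x : Q := foldl (ea_t A) q x.

Lemma state_map_cat q x y :
  state_map A q (x ++ y) = state_map A q x ++ state_map A (run q x) y.
Proof. by elim: x q => [|a x IHx] q //=; rewrite IHx catA. Qed.

(* [F (word_section qs a)] is the section of [F qs] at the letter [a]. *)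
Fixpoint word_section qs a : seq Q :=
  if qs is q :: qs' then run q (F qs' [:: a]) :: word_section qs' a else [::].

Lemma word_map_cons qs a x : F qs (a :: x) = F qs [:: a] ++ F (word_section qs a) x.
Proof.
elim: qs => //= q qs IHqs.
by rewrite /= in IHqs; rewrite IHqs state_map_cat.
Qed.

Definition first_letter qs a : Sigma := head a (F qs [:: a]).

Lemma head_word_map_cons qs b c y : head c (F qs (b :: y)) = first_letter qs b.
Proof.
rewrite word_map_cons /first_letter.
by have := leq_size_word_map qs [:: b]; case: (F qs [:: b]).
Qed.

Lemma head_iter_word_map qs k a w :
  head a (iter k (F qs) (a :: w)) = iter k (first_letter qs) a.
Proof.
elim: k => //= k <-; have := leq_size_iter_word_map qs k (a :: w).
by case: (iter k _ _) => // b y _; rewrite head_word_map_cons.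
Qed.

Lemma word_map_letter qs a w :
  size (F qs (a :: w)) <= (size w).+1 -> F qs [:: a] = [:: first_letter qs a].
Proof.
rewrite word_map_cons size_cat /first_letter.
have := leq_size_word_map (word_section qs a) w.
have := leq_size_word_map qs [:: a]; case: (F qs [:: a]) => [|b [|c o]] //= _.
move=> le_w le_sum; have := leq_trans (leq_add (leqnn (size o).+2) le_w) le_sum.
by rewrite addSn ltnS ltnNge leq_addl.
Qed.

Lemma iter_word_map_fixed_letter qs a k x : F qs [:: a] = [:: a] ->
  iter k (F qs) (a :: x) = a :: iter k (F (word_section qs a)) x.
Proof. by move=> fix_a; elim: k => //= k ->; rewrite word_map_cons fix_a. Qed.

Lemma size_iter_word_map_periodic qs d k w :
  0 < d -> iter d (F qs) w = w -> size (iter k (F qs) w) = size w.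
Proof.
move=> d_gt0 fix_d; apply/eqP; rewrite eqn_leq leq_size_iter_word_map andbT.
apply: leq_trans (leq_size_iter_word_map qs (d * k - k) _) _.
by rewrite -iterD subnK ?leq_pmull // (iter_fix_dvdn fix_d) ?dvdn_mulr.
Qed.

Let N := #|Sigma|`!.

Theorem iter_word_map_periodic qs d w :
  0 < d -> iter d (F qs) w = w -> iter (N ^ size w) (F qs) w = w.
Proof.
elim: w qs => [|a w IHw] qs d_gt0 fix_d; first by rewrite iter_fix ?word_map_nil.
pose R := flatten (nseq N qs); pose G := F (word_section R a).
have letter_fix : iter N (first_letter qs) a = a.
  by apply: (iter_fact_card d_gt0); rewrite -(head_iter_word_map _ _ _ w) fix_d.
have R_a : F R [:: a] = [:: a].
  rewrite (@word_map_letter _ _ w) -?iter_word_map.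
    by rewrite -(head_word_map_cons _ _ a w) -iter_word_map head_iter_word_map letter_fix.
  by rewrite (size_iter_word_map_periodic _ d_gt0 fix_d).
have G_fix : iter d G w = w.
  have : iter d (F R) (a :: w) = a :: w.
    by rewrite -(eq_iter (iter_word_map N qs)) -iterM mulnC iterM iter_fix.
  by rewrite iter_word_map_fixed_letter // => -[].
rewrite expnSr iterM (eq_iter (iter_word_map N qs)).
by rewrite iter_word_map_fixed_letter // (IHw _ d_gt0 G_fix).
Qed.

Lemma iter_word_map_cancel_coprime qs k p w : 0 < k * p -> coprime p N ->
  iter (k * p) (F qs) w = w -> iter k (F qs) w = w.
Proof.
move=> kp_gt0 co_pN fix_kp; pose g := gcdn (k * p) (N ^ size w).
have fix_g : iter g (F qs) w = w.
  by apply: iter_fix_gcdn fix_kp (iter_word_map_periodic kp_gt0 fix_kp).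
apply: iter_fix_dvdn fix_g _.
have co_gp : coprime g p by rewrite coprime_sym (coprime_dvdr (dvdn_gcdr _ _)) ?coprimeXr.
by rewrite -(Gauss_dvdl _ co_gp) dvdn_gcdl.
Qed.

End ExpandingAutomaton.

Theorem mainTheorem9 (Q Sigma : finType) (A : expanding_automaton Q Sigma)
    (s : seq Sigma -> seq Sigma) (m n : nat) :
  in_S A s ->
  0 < m -> m < n ->
  iter m s =1 iter n s ->
  (forall i j, 0 < i -> i < j -> j < n -> ~ (iter i s =1 iter j s)) ->
  forall p : nat, prime p -> p %| n - m -> p %| #|Sigma|`!.
Proof.
move=> [qs [_ s_qs]] m_gt0 lt_mn fix_mn distinct p p_pr /dvdnP[k def_nm].
apply/negPn/negP; rewrite -prime_coprime // => co_pN.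
have kp_gt0 : 0 < k * p by rewrite -def_nm subn_gt0.
have k_gt0 : 0 < k by move: kp_gt0; rewrite muln_gt0 => /andP[].
apply: (distinct m (m + k)) => //.
- by rewrite -addn1 leq_add2l.
- by rewrite -ltn_subRL def_nm ltn_Pmulr // prime_gt1.
move=> w; rewrite addnC iterD; set u := iter m s w.
have fix_u : iter (k * p) (word_map A qs) u = u.
  by rewrite -(eq_iter s_qs) /u -iterD -def_nm subnK ?fix_mn // ltnW.
by rewrite (eq_iter s_qs) (iter_word_map_cancel_coprime kp_gt0 co_pN fix_u).
Qed.
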